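(* Let $S$ be a sampling of $[n]$ which is non-vacuous, has $c_1$-uniform support with $c_1\ge1$, and is $\tau$-uniform. Then $\frac{|\mathrm{supp}(S)|}{c_1}=\frac n\tau$. Consequently, for $\mathbf W=\mathrm{diag}(w_1,\dots,w_n)\succ0$ and the minibatch sketch $\mathbf S=\mathbf I_S$, the stochastic condition number satisfies $\kappa=p_1=\dots=p_n=\frac\tau n=\frac{c_1}{|\mathrm{supp}(S)|}$.
   Context: $p_C=\Pr(S=C)$, $p_i=\Pr(i\in S)$, $\mathrm{supp}(S)=\{C:p_C>0\}$; non-vacuous: $p_\emptyset=0$; $c_1$-uniform support: $|\{C\in\mathrm{supp}(S):i\in C\}|=c_1$ for all $i$; $\tau$-uniform: $p_i=p_j$ for all $i,j$ and $|S|=\tau$ a.s. $\mathbf I_S$ is the column submatrix of the identity with columns in $S$; $\Pi_{\mathbf S}=\mathbf S(\mathbf S^\top\mathbf W\mathbf S)^\dagger\mathbf S^\top\mathbf W$; $\kappa=\lambda_{\min}(\mathbb{E}[\Pi_{\mathbf S}])$. *)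

From HB Require Import structures.
From mathcomp Require Import all_boot all_order all_algebra.
From mathcomp Require Import reals.
Set Implicit Arguments. Unset Strict Implicit. Unset Printing Implicit Defensive.
Import Order.TTheory GRing.Theory Num.Theory.
Local Open Scope ring_scope.

(* A sampling S of [n] = {0,..,n-1} is a probability distribution
   p C = Pr(S = C) on subsets C of 'I_n. *)
Definition is_sampling (R : realType) (n : nat) (p : {ffun {set 'I_n} -> R}) :=
  (forall C, 0 <= p C) /\ \sum_(C : {set 'I_n}) p C = 1.

Definition supp (R : realType) (n : nat) (p : {ffun {set 'I_n} -> R})
  : {set {set 'I_n}} := [set C | 0 < p C].

Definition incl_prob (R : realType) (n : nat) (p : {ffun {set 'I_n} -> R}) (i : 'I_n) : R :=
  \sum_(C : {set 'I_n} | i \in C) p C.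

Definition non_vacuous (R : realType) (n : nat) (p : {ffun {set 'I_n} -> R}) :=
  p set0 = 0.

Definition uniform_support (R : realType) (n : nat) (p : {ffun {set 'I_n} -> R}) (c1 : nat) :=
  forall i : 'I_n, #|[set C in supp p | i \in C]| = c1.

Definition tau_uniform (R : realType) (n : nat) (p : {ffun {set 'I_n} -> R}) (tau : nat) :=
  (forall i j : 'I_n, incl_prob p i = incl_prob p j) /\
  (forall C, 0 < p C -> #|C| = tau).

(* Moore--Penrose pseudo-inverse via a full-rank factorisation A = B *m C
   (B = col_base A, C = row_base A):  A^+ = C^T (C C^T)^-1 (B^T B)^-1 B^T. *)
Definition mp_pinv (R : realType) (m k : nat) (A : 'M[R]_(m, k)) : 'M[R]_(k, m) :=
  let B := col_base A in let C := row_base A in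
  (C^T *m invmx (C *m C^T)) *m (invmx (B^T *m B) *m B^T).

(* I_C : columns of the n x n identity indexed by C (in increasing order) *)
Definition col_sketch (R : realType) (n : nat) (C : {set 'I_n}) : 'M[R]_(n, #|C|) :=
  \matrix_(i < n, j < #|C|) (i == enum_val j)%:R.

Definition proj_sketch (R : realType) (n k : nat) (W : 'M[R]_n) (S : 'M[R]_(n, k)) : 'M[R]_n :=
  S *m mp_pinv (S^T *m W *m S) *m S^T *m W.

Definition expected_proj (R : realType) (n : nat) (p : {ffun {set 'I_n} -> R}) (W : 'M[R]_n)
  : 'M[R]_n := \sum_(C : {set 'I_n}) p C *: proj_sketch W (col_sketch R C).

Definition lambda_min (R : realType) (n : nat) (A : 'M[R]_n) : R :=
  inf (fun a : R => is_true (eigenvalue A a)).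

From HB Require Import structures.
From mathcomp Require Import all_boot all_order all_algebra.
From mathcomp Require Import reals.
From mathcomp Require boolp.
Set Implicit Arguments. Unset Strict Implicit. Unset Printing Implicit Defensive.
Import Order.TTheory GRing.Theory Num.Theory.
Local Open Scope ring_scope.

(* Double counting the pairs (i, C) with i \in C \in supp(S) gives
   n c1 = |supp(S)| tau, and summing the inclusion probabilities gives
   \sum_i p_i = E|S| = tau, so p_i = tau / n for every i.  For a diagonal
   W > 0 the Gram matrix I_C^T W I_C is diagonal and invertible, so the
   pseudo-inverse is its inverse and Pi_{I_C} is the 0/1 diagonal indicator
   matrix of C; hence E[Pi_S] = diag(p_1, ..., p_n) = (tau / n) I, whose only
   eigenvalue is tau / n. *)

Lemma row_free_gram_unitmx (R : realFieldType) r k (M : 'M[R]_(r, k)) :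
  row_free M -> M *m M^T \in unitmx.
Proof.
move=> freeM; rewrite -row_free_unit; apply: inj_row_free => v.
rewrite mulmxA => vMMt0.
have vM0 : v *m M = 0.
  have : (v *m M) *m (v *m M)^T = 0 by rewrite trmx_mul mulmxA vMMt0 mul0mx.
  move/matrixP/(_ ord0 ord0); rewrite !mxE => /eqP.
  rewrite psumr_eq0 => [/allP sq0|j _]; last by rewrite !mxE -expr2 sqr_ge0.
  apply/matrixP => i j; rewrite (ord1 i) mxE.
  by have := sq0 j (mem_index_enum j); rewrite !mxE -expr2 sqrf_eq0 => /eqP.
by apply/eqP; rewrite -(mulmx_free_eq0 _ freeM) vM0.
Qed.

Lemma full_rank_factor_ginv (R : realFieldType) m r k
    (B : 'M[R]_(m, r)) (C : 'M[R]_(r, k)) :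
  row_free C -> row_free B^T ->
  B *m C *m (C^T *m invmx (C *m C^T) *m (invmx (B^T *m B) *m B^T)) *m (B *m C)
  = B *m C.
Proof.
move=> /row_free_gram_unitmx uC /row_free_gram_unitmx; rewrite trmxK => uB.
rewrite !mulmxA -(mulmxA B C C^T) (mulmxK uC).
by rewrite -(mulmxA _ B^T B) (mulmxKV uB).
Qed.

Lemma mp_pinv_ginv (R : realType) m k (A : 'M[R]_(m, k)) :
  A *m mp_pinv A *m A = A.
Proof.
have freeBt : row_free (col_base A)^T.
  by rewrite /row_free mxrank_tr; apply: col_base_full.
by move: (full_rank_factor_ginv (row_base_free A) freeBt); rewrite mulmx_base.
Qed.

Lemma mp_pinv_unitmx (R : realType) k (A : 'M[R]_k) :
  A \in unitmx -> mp_pinv A = invmx A.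
Proof.
move=> uA; have := congr1 (fun X => invmx A *m X *m invmx A) (mp_pinv_ginv A).
move: (mp_pinv A) => P /=.
by rewrite !mulmxA !(mulmxK uA) !(mulVmx uA) !mul1mx.
Qed.

Lemma invmx_diag (F : fieldType) n (d : 'rV[F]_n) :
  (forall i, d 0 i != 0) -> invmx (diag_mx d) = diag_mx (map_mx GRing.inv d).
Proof.
move=> d_neq0.
have dd' : diag_mx d *m diag_mx (map_mx GRing.inv d) = 1%:M.
  rewrite -diag_const_mx mul_mx_diag; apply/matrixP => i j; rewrite !mxE.
  by case: eqVneq => [<-|_]; rewrite ?mulr1n ?mulfV ?mulr0n ?mul0r.
have [ud _] := mulmx1_unit dd'.
by rewrite -[invmx _]mulmx1 -dd' mulmxA mulVmx ?mul1mx.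
Qed.

Section ColumnSketch.

Variables (R : realType) (n : nat) (C : {set 'I_n}).

Local Notation S := (col_sketch R C).

Lemma col_sketch_gram_diag (d : 'rV[R]_n) :
  S^T *m diag_mx d *m S = diag_mx (\row_j d 0 (enum_val j)).
Proof.
rewrite mul_mx_diag; apply/matrixP => j j'; rewrite !mxE.
rewrite (bigD1 (enum_val j)) //= big1 ?addr0 => [|i /negPf ij]; last first.
  by rewrite !mxE ij !mul0r.
rewrite !mxE !eqxx mul1r; case: (eqVneq j j') => [<-|jj']; first by rewrite eqxx mulr1.
by rewrite (inj_eq enum_val_inj) (negPf jj') mulr0.
Qed.

Lemma col_sketch_diag_mul_tr (f : 'I_n -> R) :
  S *m diag_mx (\row_j f (enum_val j)) *m S^T = diag_mx (\row_i ((i \in C)%:R * f i)).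
Proof.
rewrite mul_mx_diag; apply/matrixP => i k; rewrite !mxE.
have [iC|iNC] := boolP (i \in C); last first.
  rewrite mul0r mul0rn big1 // => j _.
  have /negPf ij : i != enum_val j by apply: contraNneq iNC => ->; apply: enum_valP.
  by rewrite !mxE ij !mul0r.
rewrite (bigD1 (enum_rank_in iC i)) //= big1 ?addr0 => [|j ij]; last first.
  have /negPf ij' : i != enum_val j.
    by apply: contra ij => /eqP eij; apply/eqP/enum_val_inj; rewrite enum_rankK_in.
  by rewrite !mxE ij' !mul0r.
rewrite !mxE enum_rankK_in // eqxx eq_sym.
by case: (i == k); rewrite ?mulr1 ?mulr0 ?mul1r.
Qed.

Lemma proj_col_sketch_diag (d : 'rV[R]_n) : (forall i, d 0 i != 0) ->
  proj_sketch (diag_mx d) S = diag_mx (\row_i (i \in C)%:R).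
Proof.
move=> d_neq0; rewrite /proj_sketch col_sketch_gram_diag mp_pinv_unitmx; last first.
  rewrite unitmxE det_diag unitfE prodf_seq_neq0.
  by apply/allP => j _; rewrite mxE d_neq0.
rewrite invmx_diag => [|j]; last by rewrite mxE d_neq0.
have -> : map_mx GRing.inv (\row_(j < #|C|) d 0 (enum_val j))
          = \row_j (d 0 (enum_val j))^-1.
  by apply/matrixP => ? j; rewrite !mxE.
rewrite (col_sketch_diag_mul_tr (fun i => (d 0 i)^-1)) mul_mx_diag.
apply/matrixP => i k; rewrite !mxE.
by case: eqP => [<-|_]; rewrite ?mulr0n ?mul0r // -mulrA mulVf ?mulr1.
Qed.

End ColumnSketch.

Lemma eigenvalue_scalar (F : fieldType) n (c a : F) : (0 < n)%N ->
  eigenvalue (c%:M : 'M_n) a = (a == c).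
Proof.
move=> n_gt0; apply/eigenvalueP/eqP => [[v]|->].
  rewrite mul_mx_scalar => /eqP; rewrite -subr_eq0 -scalerBl scaler_eq0 subr_eq0.
  by case/orP => /eqP ->; rewrite ?eqxx.
exists (const_mx 1); first by rewrite mul_mx_scalar.
by apply/eqP => /matrixP/(_ ord0 (Ordinal n_gt0)); rewrite !mxE => /eqP; rewrite oner_eq0.
Qed.

Lemma lambda_min_scalar (R : realType) n (c : R) : (0 < n)%N ->
  lambda_min (c%:M : 'M_n) = c.
Proof.
move=> n_gt0; rewrite /lambda_min -[RHS]inf1; congr inf.
apply: boolp.funext => a; apply: boolp.propext.
by rewrite eigenvalue_scalar //; split => /eqP.
Qed.

Section Sampling.

Variables (R : realType) (n : nat) (p : {ffun {set 'I_n} -> R}).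

Lemma sum_incl_prob : \sum_i incl_prob p i = \sum_(C : {set 'I_n}) #|C|%:R * p C.
Proof.
rewrite /incl_prob (exchange_big_dep predT) //=; apply: eq_bigr => C _.
by rewrite sumr_const mulr_natl; congr (_ *+ _); apply: eq_card.
Qed.

Lemma sum_card_incl_supp :
  (\sum_i #|[set C in supp p | i \in C]| = \sum_(C in supp p) #|C|)%N.
Proof.
under eq_bigr => i _ do rewrite -sum1_card.
rewrite (exchange_big_dep (fun C => C \in supp p)) => [|i C _]; last first.
  by rewrite inE => /andP[].
apply: eq_bigr => C CS; rewrite -sum1_card; apply: eq_bigl => i.
by rewrite inE CS.
Qed.

Lemma expected_proj_diag (d : 'rV[R]_n) : (forall i, d 0 i != 0) ->
  expected_proj p (diag_mx d) = diag_mx (\row_i incl_prob p i).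
Proof.
move=> d_neq0; rewrite /expected_proj.
under eq_bigr => C _ do rewrite proj_col_sketch_diag //.
apply/matrixP => i k; rewrite summxE !mxE /incl_prob -mulr_natr mulr_suml.
rewrite [RHS]big_mkcond; apply: eq_bigr => C _; rewrite !mxE.
by case: (i \in C); rewrite ?mulr1n ?mulr_natr ?mul0rn ?mulr0.
Qed.

End Sampling.

Section UniformSampling.

Variables (R : realType) (n : nat) (p : {ffun {set 'I_n} -> R}) (tau : nat).
Hypotheses (p_sampling : is_sampling p) (p_tau : tau_uniform p tau).

Lemma sampling_supp_neq0 : supp p != set0.
Proof.
case: p_sampling => p_ge0 p_sum1; apply: contra_eqN p_sum1 => /eqP supp0.
rewrite big1 => [|C _]; first by rewrite eq_sym oner_eq0.
apply/eqP; rewrite eq_le p_ge0 andbT leNgt; apply/negP => pC_gt0.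
by have := in_set0 C; rewrite -supp0 inE pC_gt0.
Qed.

Lemma tau_uniform_sum_incl_prob : \sum_i incl_prob p i = tau%:R.
Proof.
case: p_sampling => p_ge0 p_sum1; case: p_tau => _ card_tau.
rewrite sum_incl_prob -[RHS]mulr1 -p_sum1 mulr_sumr; apply: eq_bigr => C _.
by have := p_ge0 C; rewrite le_eqVlt => /orP[/eqP <-|/card_tau ->]; rewrite ?mulr0.
Qed.

Lemma tau_uniform_incl_prob i : incl_prob p i = tau%:R / n%:R.
Proof.
have n_gt0 : (0 < n)%N by apply: leq_ltn_trans (ltn_ord i).
rewrite -tau_uniform_sum_incl_prob; under eq_bigr => j _ do rewrite (p_tau.1 j i).
by rewrite sumr_const card_ord -[_ *+ n]mulr_natr mulfK // pnatr_eq0 -lt0n.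
Qed.

Lemma tau_uniform_card_supp c1 : uniform_support p c1 ->
  (n * c1 = #|supp p| * tau)%N.
Proof.
move=> p_c1; have := sum_card_incl_supp p; under eq_bigr do rewrite p_c1.
rewrite sum_nat_const card_ord => ->; rewrite -sum_nat_const.
by apply: eq_bigr => C; rewrite inE => /p_tau.2.
Qed.

Hypothesis p_nonvacuous : non_vacuous p.

Lemma tau_uniform_tau_range : (0 < tau <= n)%N.
Proof.
have /set0Pn[C] := sampling_supp_neq0; rewrite inE => pC_gt0.
rewrite -(p_tau.2 C pC_gt0) card_gt0 (leq_trans (max_card _)) ?card_ord // andbT.
by apply: contraTneq pC_gt0 => ->; rewrite p_nonvacuous ltxx.
Qed.

End UniformSampling.

Theorem lemma4p8 (R : realType) (n : nat) (p : {ffun {set 'I_n} -> R})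
  (c1 tau : nat) (w : 'I_n -> R) :
  is_sampling p -> non_vacuous p -> (1 <= c1)%N -> uniform_support p c1 ->
  tau_uniform p tau ->
  (forall i, 0 < w i) ->
  let kappa := lambda_min (expected_proj p (diag_mx (\row_i w i))) in
  (#|supp p|%:R / c1%:R = n%:R / tau%:R :> R) /\
  (forall i : 'I_n, kappa = incl_prob p i) /\
  (forall i : 'I_n, incl_prob p i = tau%:R / n%:R) /\
  (tau%:R / n%:R = c1%:R / #|supp p|%:R :> R).
Proof.
move=> p_sampling p_nonvacuous c1_gt0 p_c1 p_tau w_gt0 kappa.
have /andP[tau_gt0 tau_le_n] := tau_uniform_tau_range p_sampling p_tau p_nonvacuous.
have supp_gt0 : (0 < #|supp p|)%N by rewrite card_gt0 sampling_supp_neq0.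
have n_gt0 := leq_trans tau_gt0 tau_le_n.
have card_supp := tau_uniform_card_supp p_tau p_c1.
have inclE := tau_uniform_incl_prob p_sampling p_tau.
have kappaE : kappa = tau%:R / n%:R.
  rewrite /kappa expected_proj_diag => [|i]; last by rewrite mxE gt_eqF.
  have -> : \row_i incl_prob p i = const_mx (tau%:R / n%:R) :> 'rV[R]_n.
    by apply/matrixP => ? i; rewrite !mxE inclE.
  by rewrite diag_const_mx lambda_min_scalar.
have nat_neq0 m : (0 < m)%N -> m%:R != 0 :> R by rewrite pnatr_eq0 -lt0n.
split; last split; last split.
- by apply/eqP; rewrite eqr_div ?nat_neq0 // -!natrM card_supp.
- by move=> i; rewrite kappaE inclE.
- exact: inclE.
- by apply/eqP; rewrite eqr_div ?nat_neq0 // -!natrM mulnC -card_supp mulnC.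
Qed.
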